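(* For every even integer $n\ge 6$ there exists an $n$-intersection polished graph with exactly $n^2/4+3n/2$ vertices that has at least $2^{n/2}$ maximal cliques. Consequently, there is an infinite family of graphs $G$, each $k$-intersection polished for a suitable $k$ depending on $G$, whose number of maximal cliques is exponential in $\sqrt{|V(G)|}$.
   Context: All graphs are finite and simple. For a vertex $v$, $N[v]$ denotes its closed neighbourhood (the set of neighbours of $v$ together with $v$). For an integer $k$, $P^k(G)$ is the graph on the same vertex set as $G$ in which two distinct vertices $u,v$ are adjacent if and only if $|N[u]\cap N[v]|\ge k$, the closed neighbourhoods being taken in $G$. A graph $G$ is called $k$-intersection polished if $P^k(G)=G$. A clique is a set of pairwise adjacent vertices; it is maximal if it is not properly contained in another clique. *)

From mathcomp Require Import all_boot.
Set Implicit Arguments. Unset Strict Implicit. Unset Printing Implicit Defensive.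

Definition simple_graph (T : finType) (e : rel T) : Prop :=
  irreflexive e /\ symmetric e.

Definition cnbhd (T : finType) (e : rel T) (v : T) : {set T} :=
  [set u | (u == v) || e v u].

Definition Pk (T : finType) (e : rel T) (k : nat) : rel T :=
  fun u v => (u != v) && (k <= #|cnbhd e u :&: cnbhd e v|).

Definition intersection_polished (T : finType) (e : rel T) (k : nat) : Prop :=
  forall u v, Pk e k u v = e u v.

Definition is_clique (T : finType) (e : rel T) (A : {set T}) : bool :=
  [forall x in A, forall y in A, (x != y) ==> e x y].

Definition is_maximal_clique (T : finType) (e : rel T) (A : {set T}) : bool :=
  maxset (is_clique e) A.

Definition num_maximal_cliques (T : finType) (e : rel T) : nat :=
  #|[set A : {set T} | is_maximal_clique e A]|.

From mathcomp Require Import all_boot zify.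
Set Implicit Arguments. Unset Strict Implicit. Unset Printing Implicit Defensive.

(* Write n = 2m. The graph consists of the cocktail-party graph on the 2m
   vertices (i, b), i < m, b : bool, whose maximal cliques are the 2^m
   transversals {(i, x i) | i < m}, together with m + 1 disjoint copies of K_m,
   the t-th one joined to the transversal of the pattern [sel t].  Each copy
   with its transversal is a clique of size 2m (a "block"), the patterns are
   chosen so that every edge lies in some block, and two distinct nonadjacent
   vertices have fewer than 2m common closed neighbours; hence P^n(G) = G.
   The transversals are pairwise incompatible cliques, so they extend to 2^m
   distinct maximal cliques. *)

Lemma is_cliqueP (T : finType) (e : rel T) (A : {set T}) :
  reflect {in A &, forall x y, x != y -> e x y} (is_clique e A).
Proof.
apply: (iffP forall_inP) => [cl x y xA yA | cl x xA].
  by move/forall_inP/(_ y yA)/implyP: (cl x xA).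
by apply/forall_inP => y yA; apply/implyP; apply: cl.
Qed.

Lemma num_maximal_cliques_ge (T S : finType) (e : rel T) (A : S -> {set T}) :
  (forall s, is_clique e (A s)) ->
  (forall s s', s != s' ->
     exists x y, [/\ x \in A s, y \in A s', x != y & ~~ e x y]) ->
  #|S| <= num_maximal_cliques e.
Proof.
move=> clA sepA.
have maxA s : {M | is_maximal_clique e M & A s \subset M} := maxset_exists (clA s).
pose M s := s2val (maxA s).
have [maxM subM] : (forall s, is_maximal_clique e (M s))
                   /\ (forall s, A s \subset M s).
  by split=> s; rewrite /M; case: (maxA s).
have injM : injective M.
  move=> s s' EM; apply/eqP; apply: contraT => neq.
  have [x [y [xA yA nxy nexy]]] := sepA _ _ neq.
  have /is_cliqueP clM := maxsetp (maxM s).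
  rewrite -(negbTE nexy); apply: clM nxy; first exact: subsetP (subM s) x xA.
  by rewrite EM; apply: subsetP (subM s') y yA.
rewrite /num_maximal_cliques -cardsT -(card_imset _ injM).
by apply/subset_leq_card/subsetP => _ /imsetP [s _ ->]; rewrite inE.
Qed.

Lemma imsetK (aT rT : finType) (f : aT -> rT) (g : rT -> aT) :
  cancel f g -> forall A : {set aT}, g @: (f @: A) = A.
Proof. by move=> fK A; rewrite -imset_comp (eq_imset _ fK) imset_id. Qed.

Section Relabel.
Variables (T T' : finType) (f : T -> T') (g : T' -> T).
Hypotheses (fK : cancel f g) (gK : cancel g f).
Variable e : rel T.

Definition relabel : rel T' := fun x y => e (g x) (g y).

Lemma relabel_simple : simple_graph e -> simple_graph relabel.
Proof.
by case=> irr sym; split => [x|x y]; rewrite /relabel; [apply: irr | apply: sym].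
Qed.

Lemma cnbhd_relabel x : cnbhd relabel x = f @: cnbhd e (g x).
Proof.
by rewrite (can2_imset_pre _ fK gK); apply/setP => u; rewrite !inE (can_eq gK).
Qed.

Lemma relabel_polished k :
  intersection_polished e k -> intersection_polished relabel k.
Proof.
move=> pol u v; rewrite /relabel -pol /Pk !cnbhd_relabel -imsetI; last first.
  by move=> a b _ _; apply: (can_inj fK).
by rewrite card_imset ?(can_eq gK) //; apply: (can_inj fK).
Qed.

Lemma relabel_clique (A : {set T}) : is_clique relabel (f @: A) = is_clique e A.
Proof.
apply/is_cliqueP/is_cliqueP => cl x y.
  move=> xA yA nxy; have := cl (f x) (f y); rewrite /relabel !fK; apply.
  - exact: imset_f.
  - exact: imset_f.
  - by rewrite (can_eq fK).
move=> /imsetP [a aA ->] /imsetP [b bA ->]; rewrite (can_eq fK) /relabel !fK.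
exact: cl.
Qed.

Lemma relabel_maximal_clique (A : {set T}) :
  is_maximal_clique relabel (f @: A) = is_maximal_clique e A.
Proof.
apply/maxsetP/maxsetP; rewrite relabel_clique => -[clA maxA]; split=> // B clB sAB.
  have clfB : is_clique relabel (f @: B) by rewrite relabel_clique.
  move: (maxA _ clfB (imsetS f sAB)) => /(congr1 (fun C : {set T'} => g @: C)).
  by rewrite !(imsetK fK).
rewrite -(imsetK gK B) (maxA (g @: B)) -?relabel_clique ?imsetK //.
by rewrite -(imsetK fK A) imsetS.
Qed.
End Relabel.

Lemma num_maximal_cliques_relabel (T T' : finType) (f : T -> T') (g : T' -> T)
    (fK : cancel f g) (gK : cancel g f) (e : rel T) :
  num_maximal_cliques (relabel g e) = num_maximal_cliques e.
Proof.
rewrite /num_maximal_cliques.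
have -> : [set B | is_maximal_clique (relabel g e) B]
          = (fun A : {set T} => f @: A) @: [set A | is_maximal_clique e A].
  apply/setP => B; rewrite -(imsetK gK B) inE.
  rewrite mem_imset ?inE ?relabel_maximal_clique //.
  exact/imset_inj/(can_inj fK).
by rewrite card_imset //; apply/imset_inj/(can_inj fK).
Qed.

Lemma relabel_ord (T : finType) (N : nat) (e : rel T) : #|T| = N ->
  exists e' : rel 'I_N,
    [/\ simple_graph e -> simple_graph e',
        forall k, intersection_polished e k -> intersection_polished e' k
      & num_maximal_cliques e' = num_maximal_cliques e].
Proof.
move=> cardT; pose f v := cast_ord cardT (enum_rank v).
pose g i := enum_val (cast_ord (esym cardT) i).
have fK : cancel f g by move=> v; rewrite /f /g cast_ordK enum_rankK.
have gK : cancel g f by move=> i; rewrite /f /g enum_valK cast_ordKV.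
exists (relabel g e); split.
- exact: relabel_simple.
- exact: relabel_polished.
- exact: num_maximal_cliques_relabel fK gK e.
Qed.

Section Construction.
Variable m : nat.

Definition vertex := ('I_m * bool + 'I_m.+1 * 'I_m)%type.

Definition sel (t : 'I_m.+1) (i : 'I_m) : bool := (0 < t) && (i.+1 != t).

Definition edge : rel vertex := fun x y =>
  match x, y with
  | inl p, inl q => p.1 != q.1
  | inl p, inr q | inr q, inl p => p.2 == sel q.1 p.1
  | inr q, inr q' => (q.1 == q'.1) && (q.2 != q'.2)
  end.

Definition block t : {set vertex} :=
  [set w | match w with inl p => p.2 == sel t p.1 | inr q => q.1 == t end].

Definition left_sel t : {set vertex} := [set inl (i, sel t i) | i : 'I_m].

Lemma edge_simple : simple_graph edge.
Proof.
split; first by case=> [[i b]|[t k]] /=; rewrite ?eqxx.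
by case=> [[i b]|[t k]] [[j c]|[s l]] //=; rewrite eq_sym // [l == _]eq_sym.
Qed.

Lemma block_clique t : {in block t &, forall x y, x != y -> edge x y}.
Proof.
case=> [[i b]|[s k]] [[j c]|[s' l]]; rewrite !inE /= => /eqP-> /eqP->.
all: rewrite ?eqxx //=.
all: by apply: contraNneq => ->.
Qed.

Lemma block_sub_cnbhd t w : w \in block t -> block t \subset cnbhd edge w.
Proof.
move=> wB; apply/subsetP => y yB; rewrite inE.
by case: eqVneq => //= ne; apply: (block_clique wB yB); rewrite eq_sym.
Qed.

Lemma card_block t : m * 2 <= #|block t|.
Proof.
pose h (x : 'I_m + 'I_m) : vertex :=
  match x with inl i => inl (i, sel t i) | inr k => inr (t, k) end.
have hinj : injective h by case=> [i|k] [j|l] //= [] ->.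
have -> : m * 2 = #|h @: setT|.
  by rewrite card_imset // cardsT card_sum card_ord addnn muln2.
by apply/subset_leq_card/subsetP => _ /imsetP [[i|k] _ ->]; rewrite inE /= eqxx.
Qed.

Lemma card_left_sel t : #|left_sel t| <= m.
Proof. by rewrite -[m in _ <= m]card_ord leq_imset_card. Qed.

Lemma sel_both (m_ge3 : 2 < m) i j : exists t, sel t i && sel t j.
Proof.
pose t := if (i != 0 :> nat) && (j != 0 :> nat) then 1
          else if (i != 1 :> nat) && (j != 1 :> nat) then 2 else 3.
have t_lt : t < m.+1 by rewrite /t; repeat case: ifP => ?; lia.
by exists (inord t); rewrite /sel inordK // /t; repeat case: ifP => ?; lia.
Qed.

Lemma edge_in_block (m_ge3 : 2 < m) u v :
  edge u v -> exists t, (u \in block t) && (v \in block t).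
Proof.
case: u => [[i b]|[s k]]; case: v => [[j c]|[s' l]] /= uv.
- have {}uv : (i != j :> nat) := uv.
  case: b; case: c.
  + have [t /andP[ti tj]] := sel_both m_ge3 i j.
    by exists t; rewrite !inE /= ti tj.
  + exists (@Ordinal m.+1 j.+1 (ltn_ord j)).
    by rewrite !inE /sel /= eqSS uv !eqxx.
  + exists (@Ordinal m.+1 i.+1 (ltn_ord i)).
    by rewrite !inE /sel /= !eqxx eqSS (eq_sym (nat_of_ord j)) uv.
  + by exists ord0; rewrite !inE.
- by exists s'; rewrite !inE uv eqxx.
- by exists s; rewrite !inE uv eqxx.
- by case/andP: uv => /eqP<- _; exists s; rewrite !inE eqxx.
Qed.

Lemma cnbhdI_inr_sub u s l : u != inr (s, l) -> ~~ edge u (inr (s, l)) ->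
  cnbhd edge u :&: cnbhd edge (inr (s, l)) \subset left_sel s.
Proof.
move=> ne nuv; apply/subsetP => -[[j c]|[t r]]; rewrite !inE /=.
  by move=> /andP[_ /eqP->]; apply: imset_f.
(* [-sum_eqE] lets [/=] compute equalities between vertices. *)
case: u ne nuv => [[i b]|[s' k]]; rewrite -!sum_eqE /= ?xpair_eqE (eq_sym s t).
  by move=> _ /negbTE nb /andP[bt /orP[] /andP[/eqP ts _]]; subst t; rewrite nb in bt.
move=> nkl nkl' /andP[ut /orP[] /andP[/eqP ts _]]; subst t.
all: have [es|ns] := eqVneq s' s.
1,3: by subst s'; move: nkl nkl'; rewrite eqxx; case: eqVneq.
all: by move: ut; rewrite eq_sym (negbTE ns).
Qed.

Lemma card_cnbhdI_column i b c : b != c ->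
  #|cnbhd edge (inl (i, b)) :&: cnbhd edge (inl (i, c))| < m * 2.
Proof.
move=> bc; pose left_part : {set vertex} := [set inl p | p in [set: 'I_m * bool]].
have card_left_part : #|left_part| = m * 2.
  by rewrite card_imset ?cardsT ?card_prod ?card_ord ?card_bool //; move=> p q [].
have sub : cnbhd edge (inl (i, b)) :&: cnbhd edge (inl (i, c))
           \subset left_part :\ inl (i, b).
  apply/subsetP => -[[j d]|[t r]]; rewrite !inE -!sum_eqE /= ?xpair_eqE.
    move=> /andP[_ jc]; rewrite imset_f ?inE // andbT; apply: contraNN bc.
    by case/andP=> /eqP ji /eqP db; move: jc; rewrite ji db !eqxx orbF.
  by move=> /andP[/eqP bt /eqP ct]; rewrite bt ct eqxx in bc.
rewrite (leq_ltn_trans (subset_leq_card sub)) // -card_left_part.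
by rewrite (cardsD1 (inl (i, b)) left_part) imset_f ?inE.
Qed.

Lemma card_cnbhdI_nonedge (m_gt0 : 0 < m) u v : u != v -> ~~ edge u v ->
  #|cnbhd edge u :&: cnbhd edge v| < m * 2.
Proof.
have lt_sel (A : {set vertex}) s : A \subset left_sel s -> #|A| < m * 2.
  move=> sub; apply: leq_ltn_trans (subset_leq_card sub) _.
  by apply: leq_ltn_trans (card_left_sel s) _; lia.
case: v => [[j c]|[s l]] uv nuv; last exact/lt_sel/cnbhdI_inr_sub.
case: u uv nuv => [[i b]|[s k]] uv nuv; last first.
  rewrite setIC; apply/lt_sel/cnbhdI_inr_sub; first by rewrite eq_sym.
  by rewrite (proj2 edge_simple).
move: nuv; rewrite /= negbK => /eqP ij; subst j.
by apply: card_cnbhdI_column; apply: contraNneq uv => ->.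
Qed.

Lemma edge_polished (m_ge3 : 2 < m) : intersection_polished edge (m * 2).
Proof.
move=> u v; rewrite /Pk; case: (boolP (edge u v)) => [uv | nuv].
  have [t /andP[ut vt]] := edge_in_block m_ge3 uv.
  have -> : u != v by apply: contraTneq uv => ->; rewrite (proj1 edge_simple).
  apply: leq_trans (card_block t) (subset_leq_card _).
  by rewrite subsetI !block_sub_cnbhd.
case: eqVneq => //= uv; rewrite leqNgt card_cnbhdI_nonedge //; lia.
Qed.

Definition transversal (x : {ffun 'I_m -> bool}) : {set vertex} :=
  [set inl (i, x i) | i : 'I_m].

Lemma transversal_clique x : is_clique edge (transversal x).
Proof.
apply/is_cliqueP => _ _ /imsetP[i _ ->] /imsetP[j _ ->].
by rewrite /= => ne; apply: contraNneq ne => ->.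
Qed.

Lemma num_maximal_cliques_edge : 2 ^ m <= num_maximal_cliques edge.
Proof.
have -> : 2 ^ m = #|{ffun 'I_m -> bool}| by rewrite card_ffun card_bool card_ord.
apply: num_maximal_cliques_ge transversal_clique _ => x y xy.
have [i xyi] : exists i, x i != y i.
  apply/existsP; rewrite -negb_forall; apply: contra xy => /forallP eq_xy.
  by apply/eqP/ffunP => i; apply/eqP.
exists (inl (i, x i)), (inl (i, y i)); split; rewrite ?imset_f //=.
  by rewrite -sum_eqE /= xpair_eqE eqxx.
by rewrite eqxx.
Qed.

End Construction.

Theorem theorem4 (n : nat) (Hn : 6 <= n) (Heven : ~~ odd n) :
  exists e : rel 'I_(n * n %/ 4 + 3 * n %/ 2),
    [/\ simple_graph e, intersection_polished e n
      & 2 ^ (n %/ 2) <= num_maximal_cliques e].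
Proof.
have [m n_eq] : exists m, n = m * 2.
  by exists n./2; rewrite muln2 -{1}(odd_double_half n) (negbTE Heven).
subst n; have m_ge3 : 2 < m by lia.
have card_vertex : #|{: vertex m}| = m * 2 * (m * 2) %/ 4 + 3 * (m * 2) %/ 2.
  rewrite card_sum !card_prod !card_ord card_bool mulnACA mulnK // mulnA mulnK //; lia.
have [e [simple_e polished_e num_e]] := relabel_ord (@edge m) card_vertex.
exists e; split; [exact/simple_e/edge_simple | exact/polished_e/edge_polished |].
by rewrite num_e mulnK //; apply: num_maximal_cliques_edge.
Qed.
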